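(* Let $r,d,\mu_C:[0,\infty)\to\mathbb{R}$ be Lipschitz continuous with $r(0)>d(0)>0$, $r'<0$, $r(+\infty)=0$, $d'>0$, and $\mu_C>0$, $\mu_C'<0$, $\mu_C(\infty)=0$. Take the constant dose $c\equiv 1$ and assume there is $x_c>0$ such that $$r(x)-d(x)-c\mu_C(x)<\overline{R_c}:=r(x_c)-d(x_c)-c\mu_C(x_c)\quad\text{for all } x\neq x_c,\qquad \overline{R_c}>0.$$ Let $n_C^0>0$ be an integrable initial datum on $[0,\infty)$ and $n_C$ the solution of $$\frac{\partial}{\partial t}n_C(x,t)=\big[r(x)-d(x)-c\,\mu_C(x)\big]n_C(x,t),\qquad n_C(x,0)=n_C^0(x)$$ (the cancer-cell model with no mutations, $\theta_C=0$). Set $\rho_C(t)=\int_0^\infty n_C(x,t)\,dx$. Then $\rho_C(t)\to\infty$ as $t\to\infty$ with an exponential rate, and $\dfrac{n_C(\cdot,t)}{\rho_C(t)}\to\delta(x-x_c)$ as $t\to\infty$, weakly in the sense of measures.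
   Context: $n_C(x,t)$ is the density of cancer cells with resistance-gene expression level $x\ge0$; $r$, $d$ are birth and death rates, $c$ the (constant) drug dose and $\mu_C(x)$ the drug-induced death rate of cancer cells with level $x$. $\delta(x-x_c)$ is the Dirac mass at $x_c$. *)

From HB Require Import structures.
From mathcomp Require Import all_boot all_order all_algebra.
From mathcomp Require Import all_classical all_reals all_analysis.
Set Implicit Arguments. Unset Strict Implicit. Unset Printing Implicit Defensive.
Import Order.TTheory GRing.Theory Num.Theory.
Import numFieldNormedType.Exports.
Local Open Scope classical_set_scope.
Local Open Scope ring_scope.

Definition total_mass (R : realType) (n : R -> R -> R) (t : R) : R :=
  Rintegral (@lebesgue_measure R) `[0, +oo[ (fun x => n x t).

From HB Require Import structures.
From mathcomp Require Import all_boot all_order all_algebra.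
From mathcomp Require Import all_classical all_reals all_analysis.
From mathcomp Require Import ring lra.

(* Solving the equation pointwise in x gives n(x,t) = n0(x) exp(g(x) t) with
   g = r - d - c muC.  As g is continuous at its maximiser xc, the mass of a
   small interval next to xc already grows like exp((g(xc) - eta) t) for every
   eta > 0; this gives the exponential growth of rho.  Away from any
   neighbourhood of xc, g stays below g(xc) - eta for some eta > 0 (extreme
   value theorem on compact pieces, and g < r -> 0 at infinity), so that part
   of the mass is O(exp((g(xc) - eta) t)) = o(rho(t)), while near xc a
   continuous test function is close to its value at xc. *)

Set Implicit Arguments.
Unset Strict Implicit.
Unset Printing Implicit Defensive.
Import Order.TTheory GRing.Theory Num.Theory.
Import numFieldNormedType.Exports.
Local Open Scope classical_set_scope.
Local Open Scope ring_scope.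

Section RealFunctions.
Variable R : realType.
Implicit Types (f g : R -> R) (A : set R).

Lemma lipschitz_within_continuous f A :
  [lipschitz f x | x in A] -> {within A, continuous f}.
Proof.
move=> /pinfty_ex_gt0[k k0 fk]; apply/subspace_continuousP => x Ax.
apply/cvgrPdist_lt => e e0; apply/nbhs_ballP.
exists (e / k); first exact: divr_gt0.
move=> y /= xy Ay; apply: le_lt_trans (fk (x, y) (conj Ax Ay)) _.
by rewrite -ltr_pdivlMl // mulrC.
Qed.

Lemma within_continuous_ball f A x e : {within A, continuous f} -> A x ->
  0 < e -> exists2 r, 0 < r & forall y, A y -> `|x - y| < r -> `|f x - f y| < e.
Proof.
move=> /subspace_continuousP /(_ x) fx Ax e0.
have /cvgrPdist_lt/(_ e e0)/nbhs_ballP[r r0 fr] := fx Ax.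
by exists r => // y Ay xy; exact: fr.
Qed.

Lemma linear_ode_expR (m : R -> R) (a : R) :
  {within `[0, +oo[, continuous m} ->
  (forall t, 0 < t -> derivable m t 1 /\ derive1 m t = a * m t) ->
  forall t, 0 <= t -> m t = m 0 * expR (a * t).
Proof.
move=> mc m'E t; rewrite le_eqVlt => /orP[/eqP<-|t0]; first by rewrite mulr0 expR0 mulr1.
pose e s := expR (- a * s).
have De (s : R) : is_derive s 1 e (expR (- a * s) * - a).
  apply: is_derive1_comp.
  by have := is_deriveZ (f := id) (- a) (is_derive_id s 1); rewrite /GRing.scale /= mulr1.
have me'0 (s : R) : s \in `]0, t[ -> is_derive s 1 (m * e) 0.
  rewrite in_itv /= => /andP[s0 _]; have [dm dmv] := m'E s s0.
  have Dm : is_derive s 1 m (a * m s) by rewrite -dmv derive1E; exact: derivableP.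
  apply: is_derive_eq (is_deriveM Dm (De s)) _.
  by rewrite /= /e !/GRing.scale /=; lra.
have me_cont : {within `[0, t], continuous (m * e)}.
  move=> x; apply: continuousM.
    apply: continuous_subspaceW mc x => y; rewrite /= !in_itv /= => /andP[-> _] //.
  apply: continuous_subspaceT => y; apply: continuous_comp; last exact: continuous_expR.
  by apply: continuousM; [exact: cvg_cst | exact: cvg_id].
have [c _] := MVT_segment (ltW t0) me'0 me_cont.
rewrite mul0r /= => /eqP; rewrite subr_eq0 => /eqP.
rewrite !fctE /e mulr0 expR0 mulr1 => <-.
by rewrite -mulrA -expRD mulNr addNr expR0 mulr1.
Qed.

Lemma expR_minorant_cvgy (h : R -> R) (C lam : R) : 0 < C -> 0 < lam ->
  (forall t, 0 <= t -> C * expR (lam * t) <= h t) -> h t @[t --> +oo] --> +oo.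
Proof.
move=> C0 lam0 hC; apply/cvgryPge => A; near=> t.
have Clam0 : 0 < C * lam by rewrite mulr_gt0.
have tA : `|A| / (C * lam) <= t by near: t; apply: nbhs_pinfty_ge; rewrite num_real.
have t0 : 0 <= t by apply: le_trans tA; rewrite divr_ge0 // ltW.
apply: le_trans (hC t t0); apply: le_trans (_ : C * (1 + lam * t) <= _).
  move: tA; rewrite ler_pdivrMr // => tA; have := ler_norm A; nra.
by apply: ler_wpM2l; [exact: ltW | exact: expR_ge1Dx].
Unshelve. all: by end_near.
Qed.

Lemma near_pinfty_le_of_lt_cvg0 g h m : 0 < m ->
  (forall x, 0 <= x -> g x < h x) -> h x @[x --> +oo] --> 0 ->
  \forall x \near +oo, g x <= m.
Proof.
move=> m0 gh /cvgrPdist_lt/(_ _ m0) h_small; near=> x.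
apply/ltW/(lt_trans (gh x _)); first by near: x; apply: nbhs_pinfty_ge; rewrite num_real.
apply: le_lt_trans (ler_norm _) _; rewrite -normrN -sub0r.
by near: x.
Unshelve. all: by end_near.
Qed.

Lemma segment_uniform_gap g a b m : {within `[a, b], continuous g} ->
  (forall x, a <= x <= b -> g x < m) ->
  exists2 eta, 0 < eta & forall x, a <= x <= b -> g x <= m - eta.
Proof.
move=> gc glt; have [ab|ba] := leP a b; last first.
  by exists 1 => // x /andP[ax xb]; move: (le_lt_trans (le_trans ax xb) ba); rewrite ltxx.
have [c cab gc_max] := EVT_max ab gc; move: cab; rewrite in_itv /= => cab.
exists (m - g c); first by rewrite subr_gt0 glt.
by move=> x xab; rewrite opprB addrC subrK gc_max // in_itv.
Qed.

Lemma strict_max_gap g xc m : {within `[0, +oo[, continuous g} -> 0 <= xc ->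
  (forall x, 0 <= x -> x != xc -> g x < g xc) -> m < g xc ->
  (\forall x \near +oo, g x <= m) ->
  forall delta, 0 < delta -> exists2 eta, 0 < eta &
    forall x, 0 <= x -> delta <= `|xc - x| -> g x <= g xc - eta.
Proof.
move=> gc xc0 gmax mlt [X [_ gX]] delta delta0.
have gcS a b : 0 <= a -> {within `[a, b], continuous g}.
  move=> a0; apply: continuous_subspaceW gc => x.
  by rewrite /= !in_itv /= => /andP[ax _]; rewrite (le_trans a0 ax).
have [eta1 eta10 g1] : exists2 eta, 0 < eta &
    forall x, 0 <= x <= xc - delta -> g x <= g xc - eta.
  apply: segment_uniform_gap (gcS _ _ (lexx 0)) _ => x /andP[x0 xle].
  by apply: gmax => //; rewrite lt_eqF //; lra.
have [eta2 eta20 g2] : exists2 eta, 0 < eta &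
    forall x, xc + delta <= x <= X -> g x <= g xc - eta.
  have xd0 : 0 <= xc + delta by lra.
  apply: segment_uniform_gap (gcS _ _ xd0) _ => x /andP[xge _].
  by apply: gmax; [lra | rewrite gt_eqF //; lra].
set eta := Num.min eta1 (Num.min eta2 (g xc - m)).
have eta1le : eta <= eta1 by rewrite ge_min lexx.
have eta2le : eta <= eta2 by rewrite !ge_min lexx orbT.
have eta3le : eta <= g xc - m by rewrite !ge_min lexx !orbT.
exists eta; first by rewrite !lt_min eta10 eta20 subr_gt0.
move=> x x0 xfar; have [xle|xgt] := leP x xc.
  rewrite ger0_norm ?subr_ge0 // in xfar.
  have : 0 <= x <= xc - delta by apply/andP; split => //; lra.
  by move/g1; lra.
rewrite distrC ger0_norm in xfar; last by rewrite subr_ge0 ltW.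
have [xX|Xx] := leP x X; last by have := gX x Xx; lra.
have : xc + delta <= x <= X by apply/andP; split => //; lra.
by move/g2; lra.
Qed.

End RealFunctions.

Section RealIntegrals.
Variable R : realType.
Local Notation mu := (@lebesgue_measure R).
Implicit Types (f u v : R -> R) (A B D : set R).

Lemma integrableZl_EFin D v (k : R) : measurable D -> mu.-integrable D (EFin \o v) ->
  mu.-integrable D (EFin \o (fun x => k * v x)).
Proof. by move=> mD; apply: integrableZl. Qed.

Lemma integrableD_EFin D u v : measurable D ->
  mu.-integrable D (EFin \o u) -> mu.-integrable D (EFin \o v) ->
  mu.-integrable D (EFin \o (fun x => u x + v x)).
Proof. by move=> mD; apply: integrableD. Qed.

Lemma integrableB_EFin D u v : measurable D ->
  mu.-integrable D (EFin \o u) -> mu.-integrable D (EFin \o v) ->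
  mu.-integrable D (EFin \o (fun x => u x - v x)).
Proof. by move=> mD; apply: integrableB. Qed.

Lemma integrable_le_scale D u v k : measurable D -> measurable_fun D u ->
  mu.-integrable D (EFin \o v) -> (forall x, D x -> `|u x| <= k * v x) ->
  mu.-integrable D (EFin \o u).
Proof.
move=> mD mfu iv uk.
apply: le_integrable (integrableZl_EFin k mD iv) => //.
  exact/measurable_realfun.measurable_EFinP.
move=> x Dx; rewrite /= lee_fin (le_trans (uk x Dx)) //; exact: ler_norm.
Qed.

Lemma Rintegral_gt0 A f : measurable A -> (0 < mu A)%E ->
  mu.-integrable A (EFin \o f) -> (forall x, A x -> 0 < f x) ->
  0 < Rintegral mu A f.
Proof.
move=> mA muA intf fpos.
rewrite lt0r Rintegral_ge0 ?andbT; last by move=> x /fpos/ltW.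
rewrite /Rintegral fine_eq0 ?integrable_fin_num //; apply/negP => /eqP I0.
have /integrableP[mf _] := intf.
have : (\int[mu]_(x in A) `|(EFin \o f) x| = 0)%E.
  rewrite -I0; apply: eq_integral => x /[!inE] Ax /=.
  by rewrite ger0_norm // ltW // fpos.
move/(ae_eq_integral_abs mu mA mf) => [N [mN N0 AN]].
have : A `<=` N.
  move=> x Ax; apply: AN => /(_ Ax) /eqP.
  by rewrite /= eqe (gt_eqF (fpos x Ax)).
move=> AN'; have : (mu A <= mu N)%E by apply: le_measure; rewrite ?inE.
by rewrite N0 => /(lt_le_trans muA); rewrite ltxx.
Qed.

Lemma ge0_subset_Rintegral A B f : measurable A -> measurable B -> A `<=` B ->
  mu.-integrable B (EFin \o f) -> (forall x, B x -> 0 <= f x) ->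
  Rintegral mu A f <= Rintegral mu B f.
Proof.
move=> mA mB AB iB f0.
have iA : mu.-integrable A (EFin \o f) by apply: integrableS iB.
apply: fine_le; rewrite ?integrable_fin_num //.
by apply: ge0_subset_integral => //; case/integrableP: iB.
Qed.

End RealIntegrals.

Definition growth_sol {R : realType} (g n0 : R -> R) (x t : R) : R :=
  n0 x * expR (g x * t).

Section SelectionDynamics.
Variables (R : realType) (g n0 : R -> R) (xc : R).
Local Notation mu := (@lebesgue_measure R).
Local Notation D := (`[0, +oo[%classic : set R).
Local Notation n := (growth_sol g n0).
Hypothesis g_cont : {within `[0, +oo[, continuous g}.
Hypothesis xc_ge0 : 0 <= xc.
Hypothesis g_le_max : forall x, 0 <= x -> g x <= g xc.
Hypothesis n0_gt0 : forall x, 0 <= x -> 0 < n0 x.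
Hypothesis n0_int : mu.-integrable D (EFin \o n0).

Let mD : measurable D := measurable_itv _.

Let inD x : 0 <= x -> D x.
Proof. by rewrite /= in_itv /= => ->. Qed.

Let Din x : D x -> 0 <= x.
Proof. by rewrite /= in_itv /= andbT. Qed.

Lemma growth_sol_gt0 x t : 0 <= x -> 0 < n x t.
Proof. by move=> x0; rewrite mulr_gt0 ?expR_gt0 ?n0_gt0. Qed.

Lemma growth_sol_le x t : 0 <= x -> 0 <= t -> n x t <= expR (g xc * t) * n0 x.
Proof.
move=> x0 t0; rewrite [leRHS]mulrC ler_pM2l ?n0_gt0 // ler_expR.
by apply: ler_wpM2r => //; apply: g_le_max.
Qed.

Lemma measurable_growth_sol t : measurable_fun D (n ^~ t).
Proof.
have mn0 : measurable_fun D n0.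
  by case/integrableP: n0_int => /measurable_realfun.measurable_EFinP.
apply: measurable_realfun.measurable_funM => //; apply: measurableT_comp => //.
apply: measurable_realfun.measurable_funM; last exact: measurable_cst.
exact: measurable_realfun.subspace_continuous_measurable_fun.
Qed.

Lemma integrable_growth_sol t : 0 <= t -> mu.-integrable D (EFin \o (n ^~ t)).
Proof.
move=> t0; apply: (integrable_le_scale (k := expR (g xc * t)) mD) n0_int _.
  exact: measurable_growth_sol.
move=> x /Din x0; rewrite ger0_norm ?growth_sol_le //.
exact/ltW/growth_sol_gt0.
Qed.

Lemma interval_mass_gt0 a b : 0 <= a -> a < b -> 0 < Rintegral mu `[a, b] n0.
Proof.
move=> a0 ab; have sub : `[a, b] `<=` D.
  by move=> x; rewrite /= !in_itv /= => /andP[ax _]; rewrite (le_trans a0 ax).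
apply: Rintegral_gt0.
- exact: measurable_itv.
- by rewrite lebesgue_measure_itv /= lte_fin ab -EFinD lte_fin subr_gt0.
- by apply: integrableS n0_int => //; exact: measurable_itv.
- by move=> x /sub /Din /n0_gt0.
Qed.

Lemma total_mass_ge_interval a b kap t : 0 <= a -> 0 <= t ->
  (forall x, a <= x <= b -> kap <= g x) ->
  expR (kap * t) * Rintegral mu `[a, b] n0 <= total_mass n t.
Proof.
move=> a0 t0 gab; have sub : `[a, b] `<=` D.
  by move=> x; rewrite /= !in_itv /= => /andP[ax _]; rewrite (le_trans a0 ax).
have mI : measurable (`[a, b] : set R) := measurable_itv _.
have intI : mu.-integrable `[a, b] (EFin \o n0) by apply: integrableS n0_int.
have intnI : mu.-integrable `[a, b] (EFin \o (n ^~ t)).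
  by apply: integrableS (integrable_growth_sol t0).
rewrite -RintegralZl //; apply: le_trans (_ : Rintegral mu `[a, b] (n ^~ t) <= _).
  apply: le_Rintegral => //; first exact: integrableZl_EFin.
  move=> x xab; have /andP[ax _] := xab; rewrite /growth_sol mulrC.
  apply: ler_wpM2l; first exact/ltW/n0_gt0/(le_trans a0 ax).
  by rewrite ler_expR; apply: ler_wpM2r => //; apply: gab.
apply: ge0_subset_Rintegral => //; first exact: integrable_growth_sol.
by move=> x /Din x0; exact/ltW/growth_sol_gt0.
Qed.

Lemma total_mass_ge_expR eta : 0 < eta ->
  exists2 C, 0 < C & forall t, 0 <= t -> C * expR ((g xc - eta) * t) <= total_mass n t.
Proof.
move=> eta0; have [r r0 gr] := within_continuous_ball g_cont (inD xc_ge0) eta0.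
have xcr : xc < xc + r / 2 by rewrite ltrDl divr_gt0.
exists (Rintegral mu `[xc, xc + r / 2] n0); first exact: interval_mass_gt0.
move=> t t0; rewrite mulrC; apply: total_mass_ge_interval => // x /andP[xcx xr].
have := gr x (inD (le_trans xc_ge0 xcx)).
have xr' : `|xc - x| < r by rewrite distrC ger0_norm ?subr_ge0 //; lra.
by move=> /(_ xr'); rewrite ltr_distlC => /andP[/ltW].
Qed.

Lemma total_mass_gt0 t : 0 <= t -> 0 < total_mass n t.
Proof.
move=> t0; have [C C0 /(_ t t0)] := total_mass_ge_expR ltr01.
by apply: lt_le_trans; rewrite mulr_gt0 ?expR_gt0.
Qed.

Section Concentration.
Variables (phi : R -> R) (M : R).
Hypothesis phi_cont : {within `[0, +oo[, continuous phi}.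
Hypothesis phi_bound : forall x, 0 <= x -> `|phi x| <= M.

Lemma integrable_weighted_growth_sol t : 0 <= t ->
  mu.-integrable D (EFin \o (fun x => phi x * n x t)).
Proof.
move=> t0; apply: (integrable_le_scale (k := M * expR (g xc * t)) mD) n0_int _.
  apply: measurable_realfun.measurable_funM; last exact: measurable_growth_sol.
  exact: measurable_realfun.subspace_continuous_measurable_fun.
move=> x /Din x0; rewrite normrM (ger0_norm (ltW (growth_sol_gt0 t x0))) -mulrA.
apply: ler_pM; rewrite ?normr_ge0 ?phi_bound ?growth_sol_le //.
exact/ltW/growth_sol_gt0.
Qed.

Lemma growth_sol_deviation_le e delta eta t x : 0 <= e -> 0 <= t -> 0 <= x ->
  (`|xc - x| < delta -> `|phi xc - phi x| <= e) ->
  (delta <= `|xc - x| -> g x <= g xc - eta) ->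
  `|phi xc * n x t - phi x * n x t| <=
    e * n x t + 2 * M * expR ((g xc - eta) * t) * n0 x.
Proof.
move=> e0 t0 x0 phi_near g_far; set E := expR ((g xc - eta) * t).
have nx0 := ltW (growth_sol_gt0 t x0).
have n0E : 0 <= 2 * M * E * n0 x.
  rewrite !mulr_ge0 ?expR_ge0 ?(ltW (n0_gt0 x0)) //.
  exact: le_trans (normr_ge0 _) (phi_bound x0).
have : 0 <= e * n x t by rewrite mulr_ge0.
rewrite -mulrBl normrM (ger0_norm nx0).
have [xnear|xfar] := ltP `|xc - x| delta.
  have := ler_wpM2r nx0 (phi_near xnear); lra.
have phi2M : `|phi xc - phi x| <= 2 * M.
  have := ler_normB (phi xc) (phi x); have := phi_bound xc_ge0.
  have := phi_bound x0; lra.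
have nE : n x t <= E * n0 x.
  rewrite /growth_sol mulrC; apply: ler_wpM2r; first exact/ltW/n0_gt0.
  by rewrite ler_expR; apply: ler_wpM2r => //; apply: g_far.
have := ler_pM (normr_ge0 _) nx0 phi2M nE; lra.
Qed.

Lemma weighted_mass_deviation e delta eta t : 0 <= e -> 0 <= t ->
  (forall x, 0 <= x -> `|xc - x| < delta -> `|phi xc - phi x| <= e) ->
  (forall x, 0 <= x -> delta <= `|xc - x| -> g x <= g xc - eta) ->
  `|phi xc * total_mass n t - Rintegral mu D (fun x => phi x * n x t)| <=
    e * total_mass n t + 2 * M * expR ((g xc - eta) * t) * Rintegral mu D n0.
Proof.
move=> e0 t0 phi_near g_far; set E := expR ((g xc - eta) * t).
have int_n := integrable_growth_sol t0.
have int_phin := integrable_weighted_growth_sol t0.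
have int_xcn : mu.-integrable D (EFin \o (fun x => phi xc * n x t)).
  exact: integrableZl_EFin.
have int_dev := integrableB_EFin mD int_xcn int_phin.
have int_bound : mu.-integrable D (EFin \o (fun x => e * n x t + 2 * M * E * n0 x)).
  by apply: integrableD_EFin => //; apply: integrableZl_EFin.
rewrite /total_mass -RintegralZl // -RintegralB //.
apply: (le_trans (y := Rintegral mu D
    (fun x => `|phi xc * n x t - phi x * n x t|))); first exact: le_normr_Rintegral.
have -> : e * Rintegral mu D (n ^~ t) + 2 * M * E * Rintegral mu D n0 =
    Rintegral mu D (fun x => e * n x t + 2 * M * E * n0 x).
  by rewrite RintegralD ?RintegralZl //; apply: integrableZl_EFin.
apply: le_Rintegral => //; first exact: integrable_norm.
move=> x /Din x0.
exact: growth_sol_deviation_le e0 t0 x0 (phi_near x x0) (g_far x x0).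
Qed.

Hypothesis g_gap : forall delta, 0 < delta -> exists2 eta, 0 < eta &
  forall x, 0 <= x -> delta <= `|xc - x| -> g x <= g xc - eta.

Theorem growth_sol_concentrates :
  Rintegral mu D (fun x => phi x * n x t) / total_mass n t @[t --> +oo] --> phi xc.
Proof.
apply/cvgrPdist_lt => e e0; have e20 : 0 < e / 2 by rewrite divr_gt0.
have [delta delta0 phi_near] := within_continuous_ball phi_cont (inD xc_ge0) e20.
have [eta eta0 g_far] := g_gap delta0.
have [C C0 massC] := total_mass_ge_expR (divr_gt0 eta0 (ltr0Sn _ 1)).
set N0 := Rintegral mu D n0; set Q := 2 * M * N0.
have Q0 : 0 <= Q.
  rewrite !mulr_ge0 ?(le_trans (normr_ge0 _) (phi_bound xc_ge0)) //.
  by apply: Rintegral_ge0 => x /Din /n0_gt0 /ltW.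
have eCeta0 : 0 < e * C * eta by rewrite !mulr_gt0.
(* From then on Q exp((g xc - eta) t) < e/2 rho(t), using
   rho(t) >= C exp((g xc - eta) t) (1 + eta t / 2). *)
near=> t.
have tT : 4 * (Q + 1) / (e * C * eta) <= t.
  by near: t; apply: nbhs_pinfty_ge; rewrite num_real.
have t0 : 0 <= t.
  by apply: le_trans tT; apply: divr_ge0 (ltW eCeta0); rewrite mulr_ge0 ?addr_ge0.
set rho := total_mass n t; set I := Rintegral _ _ _.
set E := expR ((g xc - eta) * t).
have rho0 : 0 < rho := total_mass_gt0 t0.
have dev : `|phi xc * rho - I| <= e / 2 * rho + Q * E.
  rewrite (_ : Q * E = 2 * M * E * N0); last by rewrite /Q; ring.
  apply: weighted_mass_deviation (ltW e20) t0 _ g_far => x x0 xnear.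
  by apply/ltW/phi_near => //; exact: inD.
have rho_ge : C * E * (1 + eta / 2 * t) <= rho.
  apply: le_trans (massC t t0); rewrite -mulrA; apply: ler_wpM2l; first exact: ltW.
  rewrite (_ : (g xc - eta / 2) * t = (g xc - eta) * t + eta / 2 * t); last by lra.
  by rewrite expRD; apply: ler_wpM2l; [exact: expR_ge0 | exact: expR_ge1Dx].
have E0 : 0 < E := expR_gt0 _.
have tT' : 4 * (Q + 1) <= t * (e * C * eta) by rewrite -ler_pdivrMr.
rewrite -(mulfK (lt0r_neq0 rho0) (phi xc)) -mulrBl normrM normfV (gtr0_norm rho0).
rewrite ltr_pdivrMr //.
have : e / 2 * (C * E * (1 + eta / 2 * t)) <= e / 2 * rho by rewrite ler_pM2l.
have : E * (4 * (Q + 1)) <= E * (t * (e * C * eta)) by rewrite ler_pM2l.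
have := mulr_ge0 (ltW e0) (mulr_ge0 (ltW C0) (ltW E0)).
nra.
Unshelve. all: by end_near.
Qed.

End Concentration.

End SelectionDynamics.

Theorem lemma2p3 (R : realType) (r d muC : R -> R) (c xc : R)
  (n0 : R -> R) (n : R -> R -> R)
  (r_lip : [lipschitz r x | x in `[0, +oo[])
  (d_lip : [lipschitz d x | x in `[0, +oo[])
  (mu_lip : [lipschitz muC x | x in `[0, +oo[])
  (hrd : r 0 > d 0) (hd0 : d 0 > 0)
  (r_der : forall x, 0 < x -> derivable r x 1 /\ derive1 r x < 0)
  (r_inf : r x @[x --> +oo] --> 0)
  (d_der : forall x, 0 < x -> derivable d x 1 /\ derive1 d x > 0)
  (mu_pos : forall x, 0 <= x -> muC x > 0)
  (mu_der : forall x, 0 < x -> derivable muC x 1 /\ derive1 muC x < 0)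
  (mu_inf : muC x @[x --> +oo] --> 0)
  (hc : c = 1)
  (hxc : 0 < xc)
  (hmax : forall x, 0 <= x -> x != xc ->
     r x - d x - c * muC x < r xc - d xc - c * muC xc)
  (hRc : 0 < r xc - d xc - c * muC xc)
  (n0_pos : forall x, 0 <= x -> 0 < n0 x)
  (n0_int : (@lebesgue_measure R).-integrable `[0, +oo[ (fun x => (n0 x)%:E))
  (n_cont : forall x, 0 <= x -> {within `[0, +oo[, continuous (n x)})
  (n_der : forall x t, 0 <= x -> 0 < t ->
     derivable (n x) t 1 /\ derive1 (n x) t = (r x - d x - c * muC x) * n x t)
  (n_init : forall x, 0 <= x -> n x 0 = n0 x) :
  (total_mass n t @[t --> +oo] --> +oo /\
   exists lam C : R, 0 < lam /\ 0 < C /\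
     forall t, 0 <= t -> C * expR (lam * t) <= total_mass n t) /\
  (forall phi : R -> R,
     {within `[0, +oo[, continuous phi} ->
     (exists M : R, forall x, 0 <= x -> `|phi x| <= M) ->
     (Rintegral (@lebesgue_measure R) `[0, +oo[ (fun x => phi x * n x t))
       / total_mass n t @[t --> +oo] --> phi xc).
Proof.
subst c; pose g x := r x - d x - 1 * muC x.
have d_cont := lipschitz_within_continuous d_lip.
have g_cont : {within `[0, +oo[, continuous g}.
  move=> x; apply: cvgB; first apply: cvgB.
  - exact: lipschitz_within_continuous r_lip x.
  - exact: d_cont x.
  - by apply: cvgM; [exact: cvg_cst | exact: lipschitz_within_continuous mu_lip x].
have g_le x : 0 <= x -> g x <= g xc.
  by move=> x0; have [->|/(hmax _ x0)/ltW] := eqVneq x xc.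
have sol x t : 0 <= x -> 0 <= t -> n x t = growth_sol g n0 x t.
  move=> x0 t0; rewrite /growth_sol -n_init //.
  exact: linear_ode_expR (n_cont _ x0) (fun s s0 => n_der _ _ x0 s0) _ t0.
have mass t : 0 <= t -> total_mass n t = total_mass (growth_sol g n0) t.
  move=> t0; apply: eq_Rintegral => x /[!inE] /=; rewrite in_itv /= andbT => x0.
  exact: sol.
have G20 : 0 < g xc / 2 by rewrite divr_gt0.
split.
  have [C C0 massC] := total_mass_ge_expR g_cont (ltW hxc) g_le n0_pos n0_int G20.
  have growth t : 0 <= t -> C * expR (g xc / 2 * t) <= total_mass n t.
    move=> t0; rewrite mass //; have := massC t t0.
    by rewrite [X in X - _](splitr (g xc)) addrK.
  split; first exact: expR_minorant_cvgy C0 G20 growth.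
  by exists (g xc / 2), C.
move=> phi phi_cont [M phiM].
have g_lt_r x : 0 <= x -> g x < r x.
  move=> x0; have : d 0 <= d x.
    apply: (ger0_derive1_ndecry (a := 0)) => // y; rewrite in_itv /= andbT => y0.
    - exact: (d_der y y0).1.
    - exact/ltW/(d_der y y0).2.
  by have := mu_pos x x0; rewrite /g; lra.
have G2G : g xc / 2 < g xc by lra.
have gap := strict_max_gap g_cont (ltW hxc) hmax G2G
  (near_pinfty_le_of_lt_cvg0 G20 g_lt_r r_inf).
apply: cvg_trans _ (growth_sol_concentrates g_cont (ltW hxc) g_le n0_pos n0_int
  phi_cont phiM gap).
apply: near_eq_cvg; near=> t.
have t0 : 0 <= t by near: t; apply: nbhs_pinfty_ge; rewrite num_real.
rewrite mass //; congr (_ / _); apply: eq_Rintegral => x /[!inE] /=.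
by rewrite in_itv /= andbT => x0; rewrite sol.
Unshelve. all: by end_near.
Qed.
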